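(* Let $\alpha_1\ge\alpha_2\ge\cdots\ge\alpha_d>0$ and let $\beta_1,\dots,\beta_d$ be a permutation of $\alpha_1,\dots,\alpha_d$. Then \[ \sum_{i=1}^d(\sqrt{\alpha_i}-\sqrt{\beta_i})^2\le2\sum_{j=1}^{d-1}\frac{\alpha_j-\alpha_{j+1}}{\alpha_j}\sum_{i=1}^j(\alpha_i-\beta_i). \] *)

From HB Require Import structures.
From mathcomp Require Import all_boot all_order all_algebra all_fingroup.
Set Implicit Arguments. Unset Strict Implicit. Unset Printing Implicit Defensive.
Import Order.TTheory GRing.Theory Num.Theory.

From HB Require Import structures.
From mathcomp Require Import all_boot all_order all_algebra all_fingroup.
From mathcomp Require Import ring zify.

(* Write x_j = sqrt alpha_j, w_j = 1 - x_(j+1)^2 / x_j^2 = (alpha_j - alpha_(j+1)) / alpha_j,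
   and let W, Q be the prefix sums of w_j and of x_(j+1) (x_j - x_(j+1)).  The quantity
     gap i k = Q_k - Q_i - x_k^2 (1 + W_k - W_i) + x_i x_k
   vanishes for i = k, and gap i k - gap (i+1) k has the sign of x_i - x_k; hence, as a
   function of i, it decreases up to k and increases afterwards, so it is nonnegative.
   Now (x_i - x_k)^2 + 2 gap i k = 2 (W_d - W_i) (x_i^2 - x_k^2) + H_i - H_k for an explicit
   potential H, which cancels when summed along a permutation, and Abel summation turns
   sum_i (W_d - W_i) (alpha_i - beta_i) into the right-hand side of the theorem. *)

Set Implicit Arguments.
Unset Strict Implicit.
Unset Printing Implicit Defensive.

Import Order.TTheory Order.NatMonotonyTheory GRing.Theory Num.Theory.
Local Open Scope ring_scope.

Definition drop_weight {R : fieldType} (x : nat -> R) j := 1 - x j.+1 ^+ 2 / x j ^+ 2.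
Definition weight_sum {R : fieldType} (x : nat -> R) k := \sum_(0 <= j < k) drop_weight x j.
Definition cross_sum {R : fieldType} (x : nat -> R) k := \sum_(0 <= j < k) x j.+1 * (x j - x j.+1).
Definition gap {R : fieldType} (x : nat -> R) i k :=
  cross_sum x k - cross_sum x i - x k ^+ 2 * (1 + weight_sum x k - weight_sum x i) + x i * x k.

Lemma gap_diag (R : fieldType) (x : nat -> R) k : gap x k k = 0.
Proof. by rewrite /gap !subrr; ring. Qed.

Lemma gap_succ (R : fieldType) (x : nat -> R) i k : x i != 0 ->
  gap x i k - gap x i.+1 k
  = (x i - x k) * ((x i - x i.+1) * (x i * x i.+1 + x i.+1 * x k + x k * x i) / x i ^+ 2).
Proof.
move=> xi0; rewrite /gap /weight_sum /cross_sum !big_nat_recr //= /drop_weight.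
by field.
Qed.

Section Antitone.
Variables (R : realFieldType) (n : nat) (x : nat -> R).
Hypothesis x_anti : forall j l, (j <= l <= n)%N -> x l <= x j.
Hypothesis x_pos : forall j, (j <= n)%N -> 0 < x j.

Let gap_succ_factor_ge0 i k : (i < n)%N -> (k <= n)%N ->
  0 <= (x i - x i.+1) * (x i * x i.+1 + x i.+1 * x k + x k * x i) / x i ^+ 2.
Proof.
move=> lt_in le_kn; have xi_gt0 := x_pos (ltnW lt_in).
have xi1_gt0 := x_pos lt_in; have xk_gt0 := x_pos le_kn.
apply: divr_ge0; last exact: sqr_ge0.
apply: mulr_ge0; last by rewrite !addr_ge0 // mulr_ge0 // ltW.
by rewrite subr_ge0 x_anti // leqnSn.
Qed.

Lemma gap_succ_le i k : (i < k)%N -> (k <= n)%N -> gap x i.+1 k <= gap x i k.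
Proof.
move=> lt_ik le_kn; have lt_in := leq_trans lt_ik le_kn.
rewrite -subr_ge0 gap_succ ?gt_eqF ?x_pos ?(ltnW lt_in) // mulr_ge0 ?gap_succ_factor_ge0 //.
by rewrite subr_ge0 x_anti // (ltnW lt_ik).
Qed.

Lemma gap_le_succ i k : (k <= i)%N -> (i < n)%N -> gap x i k <= gap x i.+1 k.
Proof.
move=> le_ki lt_in; have le_kn := leq_trans le_ki (ltnW lt_in).
rewrite -subr_ge0 -opprB gap_succ ?gt_eqF ?x_pos ?(ltnW lt_in) // oppr_ge0.
by rewrite mulr_le0_ge0 ?gap_succ_factor_ge0 // subr_le0 x_anti // le_ki (ltnW lt_in).
Qed.

Lemma gap_ge0 i k : (i <= n)%N -> (k <= n)%N -> 0 <= gap x i k.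
Proof.
move=> le_in le_kn; rewrite -(gap_diag x k).
have [le_ik | lt_ki] := leqP i k.
  apply: (@nonincn_inP _ _ [pred j | (j <= k)%N] (gap x ^~ k)); rewrite ?inE //.
  - by move=> a b _ le_bk c /andP[_ lt_cb]; apply: leq_trans (ltnW lt_cb) le_bk.
  - by move=> j _ lt_jk; apply: gap_succ_le.
have le_ki := ltnW lt_ki.
apply: (@nondecn_inP _ _ [pred j | (k <= j <= n)%N] (gap x ^~ k)); rewrite ?inE ?leqnn ?le_ki //.
- by move=> a b /andP[le_ka _] /andP[_ le_bn] c /andP[lt_ac lt_cb]; apply/andP; split; lia.
- by move=> j /andP[le_kj _] /andP[_ lt_jn]; apply: gap_le_succ.
Qed.

Lemma sum_sqr_sub_perm_le (s : 'S_n.+1) :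
  \sum_(i < n.+1) (x i - x (s i)) ^+ 2
  <= 2 * \sum_(i < n.+1) (\sum_(i <= j < n) drop_weight x j) * (x i ^+ 2 - x (s i) ^+ 2).
Proof.
have tailE (i : 'I_n.+1) : \sum_(i <= j < n) drop_weight x j = weight_sum x n - weight_sum x i.
  by rewrite /weight_sum [in RHS](@big_cat_nat _ _ _ i) ?leq_ord //= addrAC subrr add0r.
pose potential j := x j ^+ 2 * (1 - 2 * (weight_sum x n - weight_sum x j)) - 2 * cross_sum x j.
have potential_perm : \sum_(i < n.+1) (potential i - potential (s i)) = 0.
  by rewrite sumrB (reindex_inj (@perm_inj _ s)) subrr.
rewrite mulr_sumr -[X in _ <= X]addr0 -[X in _ <= _ + X]potential_perm -big_split /=.
apply: ler_sum => i _; rewrite tailE.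
have -> : 2 * ((weight_sum x n - weight_sum x i) * (x i ^+ 2 - x (s i) ^+ 2))
          + (potential i - potential (s i)) = (x i - x (s i)) ^+ 2 + 2 * gap x i (s i).
  by rewrite /gap /potential; ring.
by rewrite lerDl mulr_ge0 // gap_ge0 // -ltnS.
Qed.

End Antitone.

Lemma sum_mul_prefix_sum (R : comNzRingType) (c e : nat -> R) N :
  \sum_(0 <= j < N) c j * \sum_(0 <= i < j.+1) e i
  = \sum_(0 <= i < N.+1) (\sum_(i <= j < N) c j) * e i.
Proof.
elim: N => [|N IHN]; first by rewrite big_geq // big_nat1 big_geq // mul0r.
rewrite big_nat_recr //= IHN [RHS]big_nat_recr //= [X in _ = _ + X * _]big_geq // mul0r addr0.
rewrite mulr_sumr -big_split /=; apply: eq_big_nat => i /andP[_ le_iN].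
by rewrite big_nat_recr ?mulrDl.
Qed.

Theorem mainTheorem14 (R : rcfType) (n : nat) (alpha : 'I_n.+1 -> R)
    (s : 'S_n.+1)
    (Hsorted : forall i j : 'I_n.+1, (i <= j)%N -> alpha j <= alpha i)
    (Hpos : 0 < alpha ord_max) :
  \sum_(i < n.+1) (Num.sqrt (alpha i) - Num.sqrt (alpha (s i))) ^+ 2
  <= 2 * \sum_(0 <= j < n)
           ((alpha (inord j) - alpha (inord j.+1)) / alpha (inord j) *
            \sum_(0 <= i < j.+1) (alpha (inord i) - alpha (s (inord i)))).
Proof.
pose x j := Num.sqrt (alpha (inord j)).
have alpha_pos j : (j <= n)%N -> 0 < alpha (inord j).
  by move=> le_jn; apply: lt_le_trans Hpos _; apply: Hsorted; rewrite inordK.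
have x_sq j : (j <= n)%N -> x j ^+ 2 = alpha (inord j).
  by move=> le_jn; rewrite sqr_sqrtr // ltW // alpha_pos.
have x_anti j l : (j <= l <= n)%N -> x l <= x j.
  case/andP=> le_jl le_ln; have le_jn := leq_trans le_jl le_ln.
  rewrite ler_sqrt; last exact: ltW (alpha_pos _ le_jn).
  by apply: Hsorted; rewrite !inordK.
have x_pos j : (j <= n)%N -> 0 < x j.
  by move=> le_jn; rewrite sqrtr_gt0 alpha_pos.
have sqrtE (i : 'I_n.+1) : Num.sqrt (alpha i) = x i by rewrite /x inord_val.
have alphaE (i : 'I_n.+1) : alpha i = x i ^+ 2 by rewrite x_sq ?leq_ord ?inord_val.
have weightE j : (j < n)%N ->
    (alpha (inord j) - alpha (inord j.+1)) / alpha (inord j) = drop_weight x j.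
  move=> lt_jn; rewrite /drop_weight !x_sq ?(ltnW lt_jn) //.
  by field; rewrite gt_eqF // alpha_pos // ltnW.
under eq_big_nat => j /andP[_ lt_jn] do rewrite weightE //.
rewrite sum_mul_prefix_sum big_mkord.
under eq_bigr => i _ do rewrite !sqrtE.
under [X in _ <= 2 * X]eq_bigr => i _ do rewrite inord_val !alphaE.
exact: sum_sqr_sub_perm_le.
Qed.
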